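(* For all $n\ge 1$, $w\text{-}sat(Q_n,Q_2)=2^n-1$.
   Context: $Q_n$ is the hypercube on $\{0,1\}^n$ with edges between vertices differing in exactly one coordinate; $Q_2$ is the 4-cycle. A graph $G\subseteq Q_n$ (on the full vertex set $\{0,1\}^n$) is $(Q_n,Q_2)$-weakly-saturated if the edges of $E(Q_n)\setminus E(G)$ can be added one at a time, in some order, so that each newly added edge creates at least one new subgraph isomorphic to $Q_2$ (in the current graph). $w\text{-}sat(Q_n,Q_2)$ is the minimum number of edges of a $(Q_n,Q_2)$-weakly-saturated graph. *)

From mathcomp Require Import all_boot.
Set Implicit Arguments. Unset Strict Implicit. Unset Printing Implicit Defensive.

Definition qvert (n : nat) := {ffun 'I_n -> bool}.

Definition qadj (n : nat) (u v : qvert n) : bool :=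
  #|[set i : 'I_n | u i != v i]| == 1.

Definition qedge (n : nat) (e : {set qvert n}) : bool :=
  [exists u : qvert n, exists v : qvert n, (e == [set u; v]) && qadj u v].

Definition qedges (n : nat) : {set {set qvert n}} := [set e | qedge e].

(* Adding edge e to the graph with edge set H (on vertex set {0,1}^n)
   creates a new copy of Q_2 (a 4-cycle), i.e. a 4-cycle a-b-c-d-a on
   distinct vertices using e = {a,b} whose other edges lie in H. *)
Definition creates_Q2 (n : nat) (H : {set {set qvert n}}) (e : {set qvert n}) : Prop :=
  exists a b c d : qvert n,
    [/\ uniq [:: a; b; c; d], e = [set a; b],
        [set b; c] \in H, [set c; d] \in H & [set d; a] \in H].

Definition weakly_saturated (n : nat) (G : {set {set qvert n}}) : Prop :=
  G \subset qedges n /\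
  exists s : seq {set qvert n},
    [/\ uniq s, s =i qedges n :\: G &
        forall i, i < size s ->
          creates_Q2 (G :|: [set x in take i s]) (nth set0 s i)].

(* Upper bound: joining every nonzero vertex to the vertex obtained by
   clearing its highest set bit gives a spanning tree with 2^n - 1 edges.
   A missing edge {u, u + e_k} has a set bit of u above k; with m the highest
   one, it closes the square u, u + e_k, u + e_k + e_m, u + e_m, two of whose
   sides are tree edges while the third has fewer common 1-coordinates.
   Adding the missing edges by increasing number of common 1-coordinates thus
   saturates.

   Lower bound: map an edge to the indicator of its two endpoints, a vector
   over GF(2).  The indicator of one side of a 4-cycle is the sum of the other
   three, so along the saturation process every edge of Q_n becomes a sum of
   edges of G.  As Q_n is connected, the same holds for chi {x} + chi {0}
   for every vertex x, hence every set of nonzero vertices is the support away from 0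
   of such a sum, and 2^(2^n - 1) <= 2^|G|. *)

From mathcomp Require Import all_boot ssralg.
Set Implicit Arguments. Unset Strict Implicit. Unset Printing Implicit Defensive.
Import GRing.Theory.

Section SubsetSums.

Local Open Scope ring_scope.

Variables (I : finType) (V : zmodType) (phi : I -> V).
Hypothesis addvv : forall v : V, v + v = 0.

Definition spanned (H : {set I}) (v : V) : Prop :=
  exists2 F : {set I}, F \subset H & \sum_(i in F) phi i = v.

Variable H : {set I}.

Lemma spanned0 : spanned H 0.
Proof. by exists set0; rewrite ?sub0set ?big_set0. Qed.

Lemma spanned_gen i : i \in H -> spanned H (phi i).
Proof. by move=> Hi; exists [set i]; rewrite ?sub1set ?big_set1. Qed.

(* The symmetric difference of the supports realises the sum, because the
   terms indexed by the intersection occur twice and cancel. *)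
Lemma spannedD u v : spanned H u -> spanned H v -> spanned H (u + v).
Proof.
move=> [A sAH <-] [B sBH <-]; exists ((A :\: B) :|: (B :\: A)).
  by rewrite subUset !(subset_trans (subsetDl _ _)).
rewrite (big_setID (A := A) B) (big_setID (A := B) A) (big_setID (A := _ :|: _) A).
have -> : (A :\: B :|: B :\: A) :&: A = A :\: B.
  by apply/setP => i; rewrite !inE; case: (i \in A); case: (i \in B).
have -> : (A :\: B :|: B :\: A) :\: A = B :\: A.
  by apply/setP => i; rewrite !inE; case: (i \in A); case: (i \in B).
by rewrite setIC addrACA addvv add0r.
Qed.

Lemma spanned_sum (J : Type) (r : seq J) (P : pred J) (F : J -> V) :
  (forall j, P j -> spanned H (F j)) -> spanned H (\sum_(j <- r | P j) F j).
Proof. by move=> hF; apply: big_ind => //; [exact: spanned0 | exact: spannedD]. Qed.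

Lemma card_spanned_image (Y : finType) (pi : V -> Y) (S : {set Y}) :
  {in S, forall y, exists2 v, spanned H v & pi v = y} -> #|S| <= 2 ^ #|H|.
Proof.
move=> hS; rewrite -card_powerset.
have sub : S \subset [set pi (\sum_(i in F) phi i) | F : {set I} in powerset H].
  apply/subsetP => y /hS [_ [F sFH <-] <-].
  by apply/imsetP; exists F; rewrite ?inE.
exact: leq_trans (subset_leq_card sub) (leq_imset_card _ _).
Qed.

End SubsetSums.

Definition chi {T : finType} (A : {set T}) : {ffun T -> bool} := [ffun x => x \in A].

Section Indicator.

Local Open Scope ring_scope.
Variable T : finType.

Lemma ffun_addbb (f : {ffun T -> bool}) : f + f = 0.
Proof. by apply/ffunP => x; rewrite !ffunE; case: (f x). Qed.

Lemma chi_pair (a b : T) : a != b -> chi [set a; b] = chi [set a] + chi [set b].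
Proof.
move=> ab; apply/ffunP => x; rewrite !ffunE !inE.
by case: (x =P a) => [->|]; rewrite ?(negbTE ab).
Qed.

Lemma chi_square (a b c d : T) : uniq [:: a; b; c; d] ->
  chi [set a; b] = chi [set b; c] + chi [set c; d] + chi [set d; a].
Proof.
rewrite /= !inE !negb_or => /and4P [/and3P [ab _ ad] /andP [bc _] cd _].
rewrite !chi_pair // 1?eq_sym //; apply/ffunP => x; rewrite !ffunE.
by case: (x \in [set a]); case: (x \in [set b]); case: (x \in [set c]);
  case: (x \in [set d]).
Qed.

Lemma chi_set1_sum (A : {set T}) : \sum_(x in A) chi [set x] = chi A.
Proof.
apply/ffunP => y; rewrite sum_ffunE ffunE.
under eq_bigr do rewrite ffunE inE.
case: (boolP (y \in A)) => yA.
  rewrite (bigD1 y) //= eqxx big1 ?addr0 // => x /andP [_ /negbTE]; by rewrite eq_sym.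
by rewrite big1 // => x xA; apply/negbTE; apply: contraNneq yA => ->.
Qed.

End Indicator.

Section Hypercube.

Variable n : nat.
Local Notation origin := (0%R : qvert n).
Implicit Types (a b x u : qvert n) (k m : 'I_n) (G : {set {set qvert n}}).

Definition flip x k : qvert n := [ffun i => x i (+) (i == k)].

Lemma flipE x k i : flip x k i = x i (+) (i == k).
Proof. by rewrite ffunE. Qed.

Lemma flipK x k : flip (flip x k) k = x.
Proof. by apply/ffunP => i; rewrite !flipE addbK. Qed.

Lemma flipC x k m : flip (flip x k) m = flip (flip x m) k.
Proof. by apply/ffunP => i; rewrite !flipE addbAC. Qed.

Lemma flip_neq x k : x != flip x k.
Proof. by apply/eqP => /ffunP/(_ k); rewrite flipE eqxx; case: (x k). Qed.

Lemma flip_edge x k : [set x; flip x k] \in qedges n.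
Proof.
rewrite inE; apply/existsP; exists x; apply/existsP; exists (flip x k).
rewrite eqxx; apply/cards1P; exists k; apply/setP => i.
by rewrite !inE flipE; case: (x i); case: (i == k).
Qed.

Lemma qedgesP e : e \in qedges n -> exists u k, e = [set u; flip u k].
Proof.
rewrite inE => /existsP [u /existsP [v /andP [/eqP -> /cards1P [k hk]]]].
exists u, k; congr [set _; _]; apply/ffunP => i; rewrite flipE.
by move/setP: hk => /(_ i); rewrite !inE => <-; case: (u i); case: (v i).
Qed.

Lemma nonzero_bit x : x != origin -> exists k, x k.
Proof.
move=> nz; apply/existsP; apply: contraNT nz => /existsPn x0.
by apply/eqP/ffunP => i; rewrite ffunE; apply/negbTE/x0.
Qed.

Lemma card_bits_flip x k : x k -> #|[set i | flip x k i]| < #|[set i | x i]|.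
Proof.
move=> xk; apply/proper_card/properP; split.
  by apply/subsetP => i; rewrite !inE flipE; case: eqP => [->|]; rewrite ?xk ?addbF.
by exists k; rewrite !inE ?flipE ?eqxx xk.
Qed.

Lemma square_uniq u k m : k != m -> uniq [:: u; flip u k; flip (flip u k) m; flip u m].
Proof.
move=> km; apply: (@map_uniq _ _ (fun v : qvert n => (v k, v m))).
by rewrite /= !flipE !eqxx eq_sym !(negbTE km) /=; case: (u k); case: (u m).
Qed.

Definition zero_above k x : bool := [forall i : 'I_n, (k < i) ==> ~~ x i].

Definition top_bit x k : bool := x k && zero_above k x.

Lemma zero_above_flip x k m : m <= k -> zero_above k (flip x m) = zero_above k x.
Proof.
move=> mk; apply: eq_forallb => i; case: (ltnP k i) => //= ki.
rewrite flipE; suff -> : (i == m) = false by rewrite addbF.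
by apply: contraTF ki => /eqP ->; rewrite -leqNgt.
Qed.

Lemma top_bit_exists x : x != origin -> exists k, top_bit x k.
Proof.
move=> /nonzero_bit [i xi].
case: (@arg_maxnP _ i (fun j => x j) val xi) => k xk maxk.
exists k; rewrite /top_bit xk; apply/forallP => j; apply/implyP => kj.
by apply: contraTN kj => /maxk; rewrite -leqNgt.
Qed.

Lemma top_bit_uniq x k m : top_bit x k -> top_bit x m -> k = m.
Proof.
move=> /andP [xk /forallP hk] /andP [xm /forallP hm].
apply: val_inj; apply/eqP; rewrite eqn_leq.
apply/andP; split; rewrite leqNgt; apply/negP.
  by move=> mk; have := implyP (hm k) mk; rewrite xk.
by move=> km; have := implyP (hk m) km; rewrite xm.
Qed.

Definition top_bit_tree : {set {set qvert n}} :=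
  [set [set p.1; flip p.1 p.2] | p in [set p : qvert n * 'I_n | top_bit p.1 p.2]].

Lemma top_bit_tree_edge x k : top_bit x k -> [set x; flip x k] \in top_bit_tree.
Proof. by move=> h; apply/imsetP; exists (x, k); rewrite ?inE. Qed.

Lemma top_bit_tree_sub : top_bit_tree \subset qedges n.
Proof. by apply/subsetP => _ /imsetP [[x k] _ ->]; apply: flip_edge. Qed.

Lemma card_top_bit_tree : #|top_bit_tree| <= 2 ^ n - 1.
Proof.
set P := [set p : qvert n * 'I_n | top_bit p.1 p.2].
have fst_inj : {in P &, injective fst}.
  move=> [x k] [y m]; rewrite !inE /= => hk hm exy.
  by move: hk; rewrite exy => /top_bit_uniq/(_ hm) ->.
have fstP : fst @: P \subset [set~ origin].
  apply/subsetP => y /imsetP [[x k]]; rewrite !inE /= => /andP [xk _] ->.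
  by apply: contraTneq xk => ->; rewrite ffunE.
apply: leq_trans (leq_imset_card _ _) _; rewrite -(card_in_imset fst_inj).
apply: leq_trans (subset_leq_card fstP) _.
by rewrite cardsC1 card_ffun card_bool card_ord subn1.
Qed.

Lemma low_edge_in_tree u k : zero_above k u -> [set u; flip u k] \in top_bit_tree.
Proof.
move=> low; case uk: (u k).
  by apply: (@top_bit_tree_edge u k); rewrite /top_bit uk.
have -> : [set u; flip u k] = [set flip u k; flip (flip u k) k] by rewrite flipK setUC.
apply: (@top_bit_tree_edge (flip u k) k).
by rewrite /top_bit zero_above_flip // flipE eqxx uk.
Qed.

Definition common_bits (e : {set qvert n}) : nat := #|[set i : 'I_n | [forall v in e, v i]]|.

Lemma common_bits_pair a b : common_bits [set a; b] = #|[set i | a i && b i]|.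
Proof.
apply: eq_card => i; rewrite !inE; apply/forallP/andP => [h | [ai bi] v].
  by split; [have := h a | have := h b]; rewrite !inE eqxx ?orbT.
by rewrite !inE; apply/implyP => /orP [] /eqP ->.
Qed.

Lemma common_bits_flip a b m : a m -> b m ->
  common_bits [set flip a m; flip b m] < common_bits [set a; b].
Proof.
move=> am bm; rewrite !common_bits_pair; apply/proper_card/properP; split.
  by apply/subsetP => i; rewrite !inE !flipE; case: eqP => [->|]; rewrite ?am ?bm ?addbF.
by exists m; rewrite !inE ?flipE ?eqxx am bm.
Qed.

(* The missing edges are added in order of increasing [r]. *)
Lemma weakly_saturated_by_rank G (r : {set qvert n} -> nat) :
  G \subset qedges n ->
  {in qedges n :\: G, forall e, exists a b c d : qvert n,
    [/\ uniq [:: a; b; c; d], e = [set a; b] &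
      all (fun f => (f \in qedges n) && ((f \in G) || (r f < r e)))
        [:: [set b; c]; [set c; d]; [set d; a]]]} ->
  weakly_saturated G.
Proof.
move=> sGE hsq; split => //.
pose le_r e1 e2 := r e1 <= r e2.
set s := sort le_r (enum (qedges n :\: G)).
have le_r_trans : transitive le_r by move=> e2 e1 e3; apply: leq_trans.
have s_sorted : sorted le_r s by apply: sort_sorted => e1 e2; apply: leq_total.
have mem_s : s =i qedges n :\: G by move=> e; rewrite mem_sort mem_enum.
exists s; split => //; first by rewrite sort_uniq enum_uniq.
move=> i lti; set e := nth set0 s i.
have in_prefix f : (f \in qedges n) && ((f \in G) || (r f < r e)) ->
    f \in G :|: [set x in take i s].
  move=> /andP [fE]; rewrite !inE; case fG: (f \in G) => //= lt.
  have fs : f \in s by rewrite mem_s inE fG fE.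
  rewrite in_take // ltnNge; apply: contraTN lt => le_if; rewrite -leqNgt.
  rewrite -(nth_index set0 fs).
  apply: (sorted_leq_nth le_r_trans (fun e' => leqnn (r e'))) => //.
  by rewrite inE index_mem.
have eM : e \in qedges n :\: G by rewrite -mem_s mem_nth.
have [a [b [c [d [abcd ei]]]]] := hsq e eM.
by move=> /and4P [bc cd da _]; exists a, b, c, d; split; rewrite ?in_prefix.
Qed.

Lemma nontree_edge_square u k : [set u; flip u k] \notin top_bit_tree ->
  exists a b c d : qvert n,
    [/\ uniq [:: a; b; c; d], [set u; flip u k] = [set a; b] &
      all (fun f => (f \in qedges n) && ((f \in top_bit_tree) ||
                    (common_bits f < common_bits [set u; flip u k])))
        [:: [set b; c]; [set c; d]; [set d; a]]].
Proof.
move=> nt; have [m /andP [um lowm]] : exists m, top_bit u m.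
  apply: top_bit_exists; apply: contraNneq nt => ->; apply: low_edge_in_tree.
  by apply/forallP => j; rewrite ffunE implybT.
have km : k < m.
  rewrite ltnNge; apply: contra nt => mk; apply: low_edge_in_tree.
  apply/forallP => j; apply/implyP => kj.
  by apply: (implyP (forallP lowm j)); apply: leq_ltn_trans kj.
have neq_km : k != m by apply: contraTneq km => ->; rewrite ltnn.
have ukm : flip u k m = u m by rewrite flipE eq_sym (negbTE neq_km) addbF.
have side1 : [set flip u k; flip (flip u k) m] \in top_bit_tree.
  apply: (@top_bit_tree_edge (flip u k) m).
  by rewrite /top_bit ukm um zero_above_flip // ltnW.
have side3 : [set flip u m; u] \in top_bit_tree.
  by rewrite setUC; apply: (@top_bit_tree_edge u m); rewrite /top_bit um.
have side2 : [set flip (flip u k) m; flip u m] \in qedges n.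
  by rewrite flipC setUC flip_edge.
have side2_smaller :
    common_bits [set flip (flip u k) m; flip u m] < common_bits [set u; flip u k].
  by rewrite [[set u; _]]setUC common_bits_flip ?ukm.
exists u, (flip u k), (flip (flip u k) m), (flip u m).
split => //; first exact: square_uniq.
rewrite /= side1 side3 side2 side2_smaller flip_edge !orbT.
by rewrite (subsetP top_bit_tree_sub _ side3).
Qed.

Lemma top_bit_tree_weakly_saturated : weakly_saturated top_bit_tree.
Proof.
apply: (@weakly_saturated_by_rank top_bit_tree common_bits top_bit_tree_sub) => e.
rewrite inE => /andP [nt /qedgesP [u [k eE]]].
by rewrite eE in nt *; apply: nontree_edge_square.
Qed.

Lemma weakly_saturated_spans G : weakly_saturated G ->
  {in qedges n, forall e, spanned chi G (chi e)}.
Proof.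
move=> [_ [s [_ mem_s hs]]].
suff in_prefix i : i <= size s ->
    {in G :|: [set x in take i s], forall e, spanned chi G (chi e)}.
  move=> e eE; apply: (in_prefix (size s)) => //.
  by rewrite take_size !inE mem_s in_setD eE andbT orbN.
elim: i => [_ e | i IH lti e]; first by rewrite take0 !inE orbF; apply: spanned_gen.
rewrite (take_nth set0 lti) !inE mem_rcons in_cons => /or3P [eG | /eqP -> | ei].
- exact: spanned_gen.
- have [a [b [c [d [abcd -> bc cd da]]]]] := hs i lti.
  rewrite (chi_square abcd).
  by do 2?apply: (spannedD (@ffun_addbb _)); apply: IH (ltnW lti) _ _.
- by apply: IH (ltnW lti) _ _; rewrite !inE ei orbT.
Qed.

Lemma spanned_vertex_sum G x : {in qedges n, forall e, spanned chi G (chi e)} ->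
  spanned chi G (chi [set x] + chi [set origin])%R.
Proof.
move=> hE; elim: {x}_.+1 {-2}x (ltnSn #|[set i | x i]|) => // N IH x.
case: (eqVneq x origin) => [-> _ | /nonzero_bit [k xk] lt_xN].
  by rewrite ffun_addbb; apply: spanned0.
have -> : (chi [set x] + chi [set origin] =
    chi [set x; flip x k] + (chi [set flip x k] + chi [set origin]))%R.
  by rewrite chi_pair ?flip_neq // addrA -(addrA (chi [set x])) ffun_addbb addr0.
apply: (spannedD (@ffun_addbb _)); first by apply: hE; apply: flip_edge.
by apply: IH; exact: leq_trans (card_bits_flip xk) lt_xN.
Qed.

Lemma weakly_saturated_card G : weakly_saturated G -> 2 ^ n - 1 <= #|G|.
Proof.
move=> /weakly_saturated_spans hE; rewrite -(@leq_exp2l 2) //.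
have := @card_spanned_image _ _ chi G _ (fun f => [set v | (v != origin) && f v])
  (powerset [set~ origin]).
rewrite card_powerset cardsC1 card_ffun card_bool card_ord subn1; apply => T.
rewrite inE => /subsetP sT; exists (\sum_(x in T) (chi [set x] + chi [set origin]))%R.
  by apply: (spanned_sum (@ffun_addbb _)) => x _; apply: spanned_vertex_sum.
apply/setP => v; rewrite inE big_split /= chi_set1_sum ffunE sum_ffunE ffunE.
case: eqVneq => [-> | nz] /=.
  by apply/esym/negbTE; apply: contraTN isT => /sT; rewrite !inE eqxx.
by rewrite big1 ?addr0 // => x _; rewrite ffunE inE (negbTE nz).
Qed.

End Hypercube.

Theorem mainTheorem12 (n : nat) (hn : 1 <= n) :
  (exists G : {set {set qvert n}}, weakly_saturated G /\ #|G| = 2 ^ n - 1) /\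
  (forall G : {set {set qvert n}}, weakly_saturated G -> 2 ^ n - 1 <= #|G|).
Proof.
split; last exact: weakly_saturated_card.
exists (top_bit_tree n); split; first exact: top_bit_tree_weakly_saturated.
apply/eqP; rewrite eqn_leq card_top_bit_tree.
exact/weakly_saturated_card/top_bit_tree_weakly_saturated.
Qed.
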